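(* Let $\Omega\subset\mathbf R^n$ ($n=1,2$) be a bounded open domain, and let $0<\rho_1\le\rho_2\le\cdots$ be the positive eigenvalues of $-\Delta$ on $\Omega$ with Neumann boundary conditions (as ordered in the context). Let $B=\begin{pmatrix} f_u & f_v\\ g_u & g_v\end{pmatrix}$ be a real matrix with $f_u>0$, $g_v<0$, $f_ug_v-f_vg_u>0$ and $f_u+g_v<0$, and let $D=\mathrm{diag}(1,d)$. For $\lambda=(\gamma,d)$ with $\gamma,d>0$ and $k=1,2,\ldots$, put $E_k(\lambda)=-\rho_kD+\gamma B$ and let $$\beta_{k1,2}(\lambda)=\tfrac12\Big(\mathrm{tr}\,E_k(\lambda)\pm\big((\mathrm{tr}\,E_k(\lambda))^2-4\det E_k(\lambda)\big)^{1/2}\Big)$$ (upper sign for $\beta_{k1}$, lower sign for $\beta_{k2}$). Let $\Lambda_1$, $R_1$, $R_2$ be as defined in the context. Then $$\Re\beta_{11}(\lambda)<0,\ \Re\beta_{12}(\lambda)<0 \text{ if } \lambda\in R_1;\qquad \beta_{11}(\lambda)=0,\ \beta_{12}(\lambda)<0 \text{ if } \lambda\in\Lambda_1;\qquad \beta_{11}(\lambda)>0,\ \beta_{12}(\lambda)<0 \text{ if } \lambda\in R_2.$$ Furthermore, for $k=2,3,\ldots$, $\Re\beta_{k1}(\lambda)<0$ and $\Re\beta_{k2}(\lambda)<0$ if $\lambda\in\Lambda_1$.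
   Context: The numbers $\beta_{k1},\beta_{k2}$ are the eigenvalues of the linearized operator $L_\lambda=\Delta D+\gamma B$ (acting on pairs of functions with Neumann boundary conditions) restricted to the span of the $k$-th Laplace eigenfunction. For $k=1,2$ define, for $\gamma>\rho_k/f_u$, $$d_k(\gamma)=\frac{\gamma^2\det(B)+\gamma\rho_k|g_v|}{\rho_k(\gamma f_u-\rho_k)},$$ so that $\det E_k(\lambda)=0$ exactly when $d=d_k(\gamma)$; the set $\{(\gamma,d):d=d_k(\gamma),\ \gamma>\rho_k/f_u\}$ is the positive branch of the curve $\Lambda_k$. Let $\gamma_1$ be the value of $\gamma$ at which the positive branches of $\Lambda_1$ and $\Lambda_2$ cross. Then $\Lambda_1$ here denotes $\{(\gamma,d_1(\gamma)):\rho_1/f_u<\gamma<\gamma_1\}$, and $R_1=\{(\gamma,d):\rho_1/f_u<\gamma<\gamma_1,\ 0<d<d_1(\gamma)\}$, $R_2=\{(\gamma,d):\rho_1/f_u<\gamma<\gamma_1,\ d_1(\gamma)<d<d_2(\gamma)\}$. *)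

From HB Require Import structures.
From mathcomp Require Import all_boot all_order all_algebra.
From mathcomp Require Import complex.
Set Implicit Arguments. Unset Strict Implicit. Unset Printing Implicit Defensive.
Import Order.TTheory GRing.Theory Num.Theory.
Local Open Scope ring_scope.

Section Defs.
Variable R : rcfType.

Definition Bmat (fu fv gu gv : R) : 'M[R]_2 :=
  \matrix_(i < 2, j < 2)
    if i == 0 :> nat then (if j == 0 :> nat then fu else fv)
    else (if j == 0 :> nat then gu else gv).

Definition Dmat (d : R) : 'M[R]_2 :=
  \matrix_(i < 2, j < 2)
    if i == j then (if i == 0 :> nat then 1 else d) else 0.

Definition Emat (fu fv gu gv rho gamma d : R) : 'M[R]_2 :=
  - (rho *: Dmat d) + gamma *: Bmat fu fv gu gv.

Definition beta1 (fu fv gu gv rho gamma d : R) : R[i] :=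
  let E := Emat fu fv gu gv rho gamma d in
  (((\tr E)%:C + sqrtc (((\tr E) ^+ 2 - 4 * \det E)%:C)) / 2)%C.

Definition beta2 (fu fv gu gv rho gamma d : R) : R[i] :=
  let E := Emat fu fv gu gv rho gamma d in
  (((\tr E)%:C - sqrtc (((\tr E) ^+ 2 - 4 * \det E)%:C)) / 2)%C.

Definition dk (fu fv gu gv rho gamma : R) : R :=
  (gamma ^+ 2 * \det (Bmat fu fv gu gv) + gamma * rho * `|gv|)
    / (rho * (gamma * fu - rho)).

End Defs.

(* The eigenvalues beta_{k1}, beta_{k2} are the roots of X^2 - (tr E) X + det E, and
   tr E < 0 always, so everything is decided by the sign of det E.  For rho = rho_1,
   det E = (d_1(gamma) - d) rho_1 (gamma f_u - rho_1), which separates R_1, Lambda_1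
   and R_2.  On Lambda_1, det E is a quadratic in rho with leading coefficient d > 0
   and a root at rho_1; the other root gamma^2 det B / (d rho_1) lies below rho_2.
   The latter reduces to the sign of a quadratic in gamma that is negative at 0 and
   vanishes at the crossing point gamma_1, hence is negative on (0, gamma_1). *)

From HB Require Import structures.
From mathcomp Require Import all_boot all_order all_algebra.
From mathcomp Require Import complex ring lra.
Set Implicit Arguments. Unset Strict Implicit. Unset Printing Implicit Defensive.
Import Order.TTheory GRing.Theory Num.Theory.
Local Open Scope ring_scope.

Lemma det_mx2 (R : comNzRingType) (A : 'M[R]_2) :
  \det A = A 0 0 * A 1 1 - A 0 1 * A 1 0.
Proof.
rewrite (expand_det_row _ 0) !big_ord_recl big_ord0 addr0 /cofactor.
rewrite !det_mx11 !mxE /=.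
rewrite expr0 expr1 mul1r mulN1r mulrN.
by congr (A _ _ * A _ _ - A _ _ * A _ _); apply: val_inj.
Qed.

Section Eigenvalues2.
Variable R : rcfType.
Implicit Types t D x : R.
Local Open Scope complex_scope.

Definition eigp t D : R[i] := (t%:C + sqrtc (t ^+ 2 - 4 * D)%:C) / 2.
Definition eigm t D : R[i] := (t%:C - sqrtc (t ^+ 2 - 4 * D)%:C) / 2.

Lemma Re_sqrtc_ltr0 x : x < 0 -> complex.Re (sqrtc x%:C) = 0.
Proof.
move=> x_lt0; rewrite /sqrtc /= expr0n addr0 sqrtr_sqr ltr0_norm //.
by rewrite addNr mul0r sqrtr0.
Qed.

Lemma eigp_real t D : 0 <= t ^+ 2 - 4 * D ->
  eigp t D = ((t + Num.sqrt (t ^+ 2 - 4 * D)) / 2)%:C.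
Proof.
move=> disc_ge0; rewrite /eigp sqrtc_sqrtr ?ler0c //=.
by rewrite rmorphM rmorphD fmorphV rmorph_nat.
Qed.

Lemma eigm_real t D : 0 <= t ^+ 2 - 4 * D ->
  eigm t D = ((t - Num.sqrt (t ^+ 2 - 4 * D)) / 2)%:C.
Proof.
move=> disc_ge0; rewrite /eigm sqrtc_sqrtr ?ler0c //=.
by rewrite rmorphM rmorphB fmorphV rmorph_nat.
Qed.

Lemma Re_eig_cplx t D : t ^+ 2 - 4 * D < 0 ->
  complex.Re (eigp t D) = t / 2 /\ complex.Re (eigm t D) = t / 2.
Proof.
move=> /Re_sqrtc_ltr0; rewrite /eigp /eigm.
by case: (sqrtc _) => a b /= ->; split; simpc; field.
Qed.

Lemma Re_eig_lt0 t D : t < 0 -> 0 < D ->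
  complex.Re (eigp t D) < 0 /\ complex.Re (eigm t D) < 0.
Proof.
move=> t_lt0 D_gt0; have [disc_ge0|disc_lt0] := leP 0 (t ^+ 2 - 4 * D); last first.
  by have [-> ->] := Re_eig_cplx disc_lt0; split; lra.
rewrite eigp_real // eigm_real //=.
have := sqr_sqrtr disc_ge0; have := sqrtr_ge0 (t ^+ 2 - 4 * D).
set s := Num.sqrt _ => s_ge0 s2; split; nra.
Qed.

Lemma eig_det0 t : t < 0 -> eigp t 0 = 0 /\ eigm t 0 < 0.
Proof.
move=> t_lt0; have disc : t ^+ 2 - 4 * 0 = t ^+ 2 by rewrite mulr0 subr0.
have disc_ge0 : 0 <= t ^+ 2 - 4 * 0 by rewrite disc sqr_ge0.
rewrite eigp_real // eigm_real // disc sqrtr_sqr ltr0_norm // ltcR.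
by split; [congr (_%:C); field | lra].
Qed.

Lemma eig_det_lt0 t D : D < 0 -> 0 < eigp t D /\ eigm t D < 0.
Proof.
move=> D_lt0; have disc_gt0 : 0 < t ^+ 2 - 4 * D by nra.
rewrite eigp_real ?eigm_real ?ltW // !ltcR.
have := sqr_sqrtr (ltW disc_gt0); have := sqrtr_ge0 (t ^+ 2 - 4 * D).
set s := Num.sqrt _ => s_ge0 s2; split; nra.
Qed.

End Eigenvalues2.

Section TuringMatrix.
Variables (R : rcfType) (fu fv gu gv : R).
Implicit Types r rho g d : R.

Local Notation detB := (fu * gv - fv * gu).
Local Notation E := (Emat fu fv gu gv).
Local Notation dk := (dk fu fv gu gv).

Lemma det_Bmat : \det (Bmat fu fv gu gv) = detB.
Proof. by rewrite det_mx2 !mxE. Qed.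

Lemma tr_Emat rho g d : \tr (E rho g d) = - rho * (1 + d) + g * (fu + gv).
Proof. by rewrite /mxtrace !big_ord_recr big_ord0 !mxE /=; ring. Qed.

Lemma det_Emat rho g d :
  \det (E rho g d) = (g * fu - rho) * (g * gv - rho * d) - g ^+ 2 * fv * gu.
Proof. by rewrite det_mx2 !mxE /=; ring. Qed.

Lemma beta1E rho g d :
  beta1 fu fv gu gv rho g d = eigp (\tr (E rho g d)) (\det (E rho g d)).
Proof. by []. Qed.

Lemma beta2E rho g d :
  beta2 fu fv gu gv rho g d = eigm (\tr (E rho g d)) (\det (E rho g d)).
Proof. by []. Qed.

Lemma tr_Emat_lt0 rho g d : fu + gv < 0 -> 0 < rho -> 0 <= d -> 0 < g ->
  \tr (E rho g d) < 0.
Proof.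
move=> trB_lt0 rho_gt0 d_ge0 g_gt0; rewrite tr_Emat.
have : 0 < rho * (1 + d) by rewrite mulr_gt0 // ltr_wpDr.
have : g * (fu + gv) < 0 by rewrite pmulr_rlt0.
lra.
Qed.

Lemma det_Emat_factor r rho g d :
  r * \det (E rho g d)
  = (rho - r) * (d * rho * r - g ^+ 2 * detB) + rho * \det (E r g d).
Proof. by rewrite !det_Emat; ring. Qed.

Hypothesis gv_le0 : gv <= 0.

Lemma dk_mul_denom rho g : rho * (g * fu - rho) != 0 ->
  dk rho g * (rho * (g * fu - rho)) = g ^+ 2 * detB - g * rho * gv.
Proof. by move=> denom_neq0; rewrite /dk det_Bmat ler0_norm // mulfVK //; ring. Qed.

Lemma det_Emat_dk rho g d : rho * (g * fu - rho) != 0 ->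
  \det (E rho g d) = (dk rho g - d) * (rho * (g * fu - rho)).
Proof. by move=> /dk_mul_denom dkE; rewrite det_Emat [RHS]mulrBl dkE; ring. Qed.

Lemma dk_gt0 rho g : 0 < detB -> 0 < rho -> 0 < g -> rho < g * fu -> 0 < dk rho g.
Proof.
move=> detB_gt0 rho_gt0 g_gt0 rho_lt; have denom_gt0 : 0 < rho * (g * fu - rho).
  by rewrite mulr_gt0 // subr_gt0.
rewrite -(pmulr_lgt0 _ denom_gt0) dk_mul_denom ?gt_eqF //.
have : 0 < g ^+ 2 * detB by rewrite mulr_gt0 // exprn_gt0.
have : 0 <= g * rho * - gv by rewrite mulr_ge0 ?oppr_ge0 // mulr_ge0 // ltW.
lra.
Qed.

(* [g * (r2 - r1) * cross_poly r1 r2 g] is the numerator of [dk r1 g - dk r2 g]. *)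
Definition cross_poly (r1 r2 g : R) :=
  detB * fu * g ^+ 2 - detB * (r1 + r2) * g + r1 * r2 * gv.

Lemma dk_eq_cross_poly (r1 r2 g : R) : 0 < g -> r1 < r2 ->
  r1 * (g * fu - r1) != 0 -> r2 * (g * fu - r2) != 0 ->
  dk r1 g = dk r2 g -> cross_poly r1 r2 g = 0.
Proof.
move=> g_gt0 r12 denom1 denom2 dk12.
have : g * (r2 - r1) * cross_poly r1 r2 g = 0.
  transitivity (dk r1 g * (r1 * (g * fu - r1)) * (r2 * (g * fu - r2))
                - dk r2 g * (r2 * (g * fu - r2)) * (r1 * (g * fu - r1))).
    by rewrite !dk_mul_denom // /cross_poly; ring.
  by rewrite dk12; ring.
by move/eqP; rewrite !mulf_eq0 subr_eq0 gt_eqF ?(gt_eqF r12) //= => /eqP.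
Qed.

Lemma cross_poly_lt0 (r1 r2 g g1 : R) : 0 < detB -> 0 < fu -> 0 <= r1 * r2 ->
  0 < g -> g < g1 -> cross_poly r1 r2 g1 = 0 -> cross_poly r1 r2 g < 0.
Proof.
move=> detB_gt0 fu_gt0 r12_ge0 g_gt0 g_lt crossP.
have g1_gt0 : 0 < g1 by apply: lt_trans g_lt.
rewrite -(pmulr_llt0 _ g1_gt0).
have -> : cross_poly r1 r2 g * g1
    = (g - g1) * (detB * fu * g * g1 - r1 * r2 * gv) + cross_poly r1 r2 g1 * g.
  by rewrite /cross_poly; ring.
rewrite crossP mul0r addr0 nmulr_rlt0 ?subr_lt0 //.
have : 0 < detB * fu * g * g1 by rewrite !mulr_gt0.
have : 0 <= r1 * r2 * - gv by rewrite mulr_ge0 ?oppr_ge0.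
lra.
Qed.

Lemma dk_mul_gt (r1 r2 g : R) : 0 < g -> 0 < r1 -> r1 < g * fu ->
  cross_poly r1 r2 g < 0 -> g ^+ 2 * detB < dk r1 g * r1 * r2.
Proof.
move=> g_gt0 r1_gt0 r1_lt crossP; rewrite -subr_gt0.
have gap_gt0 : 0 < g * fu - r1 by rewrite subr_gt0.
rewrite -(pmulr_lgt0 _ gap_gt0).
have -> : (dk r1 g * r1 * r2 - g ^+ 2 * detB) * (g * fu - r1)
    = dk r1 g * (r1 * (g * fu - r1)) * r2 - g ^+ 2 * detB * (g * fu - r1) by ring.
rewrite dk_mul_denom ?mulf_neq0 ?gt_eqF //.
have -> : (g ^+ 2 * detB - g * r1 * gv) * r2 - g ^+ 2 * detB * (g * fu - r1)
    = g * - cross_poly r1 r2 g by rewrite /cross_poly; ring.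
by rewrite mulr_gt0 // oppr_gt0.
Qed.

Lemma det_Emat_dk_gt0 (r1 r2 rho g : R) :
  0 < r1 -> r1 < r2 -> r2 <= rho -> r1 < g * fu ->
  0 <= dk r1 g -> g ^+ 2 * detB < dk r1 g * r1 * r2 -> 0 < \det (E rho g (dk r1 g)).
Proof.
move=> r1_gt0 r12 r2_le r1_lt dk_ge0 dk_gt.
rewrite -(pmulr_rgt0 _ r1_gt0) det_Emat_factor.
rewrite det_Emat_dk ?mulf_neq0 ?gt_eqF ?subr_gt0 //.
rewrite subrr !mul0r mulr0 addr0 mulr_gt0 // subr_gt0; first exact: lt_le_trans r2_le.
apply: lt_le_trans dk_gt _; rewrite mulrAC ler_wpM2r ?ler_wpM2l //; exact: ltW.
Qed.

End TuringMatrix.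

Theorem lemma3p1 (R : rcfType) (rho : nat -> R) (fu fv gu gv gamma1 : R) :
  0 < rho 1%N ->
  (forall k : nat, (1 <= k)%N -> rho k <= rho k.+1) ->
  0 < fu -> gv < 0 -> 0 < fu * gv - fv * gu -> fu + gv < 0 ->
  rho 1%N < rho 2%N ->
  rho 2%N / fu < gamma1 ->
  dk fu fv gu gv (rho 1%N) gamma1 = dk fu fv gu gv (rho 2%N) gamma1 ->
  (forall gamma d : R,
      rho 1%N / fu < gamma < gamma1 ->
      0 < d < dk fu fv gu gv (rho 1%N) gamma ->
      complex.Re (beta1 fu fv gu gv (rho 1%N) gamma d) < 0 /\
      complex.Re (beta2 fu fv gu gv (rho 1%N) gamma d) < 0) /\
  (forall gamma : R,
      rho 1%N / fu < gamma < gamma1 ->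
      beta1 fu fv gu gv (rho 1%N) gamma (dk fu fv gu gv (rho 1%N) gamma) = 0 /\
      beta2 fu fv gu gv (rho 1%N) gamma (dk fu fv gu gv (rho 1%N) gamma) < 0) /\
  (forall gamma d : R,
      rho 1%N / fu < gamma < gamma1 ->
      dk fu fv gu gv (rho 1%N) gamma < d < dk fu fv gu gv (rho 2%N) gamma ->
      0 < beta1 fu fv gu gv (rho 1%N) gamma d /\
      beta2 fu fv gu gv (rho 1%N) gamma d < 0) /\
  (forall (k : nat) (gamma : R), (2 <= k)%N ->
      rho 1%N / fu < gamma < gamma1 ->
      complex.Re (beta1 fu fv gu gv (rho k) gamma (dk fu fv gu gv (rho 1%N) gamma)) < 0 /\
      complex.Re (beta2 fu fv gu gv (rho k) gamma (dk fu fv gu gv (rho 1%N) gamma)) < 0).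
Proof.
move=> r1_gt0 rho_mono fu_gt0 gv_lt0 detB_gt0 trB_lt0 r12 r2_lt_g1 dk_cross.
have gv_le0 := ltW gv_lt0.
have rho_homo : {in [pred i | 0 < i]%N &, {homo rho : i j / (i <= j)%N >-> i <= j}}.
  apply: homo_leq_in; [exact: lexx | exact: le_trans | |].
    by move=> i j i_gt0 _ k /andP[/(ltn_trans i_gt0)].
  by move=> i i_gt0 _; apply: rho_mono.
have r2_le k : (2 <= k)%N -> rho 2%N <= rho k.
  by move=> k_ge2; apply: rho_homo => //; apply: leq_trans k_ge2.
have admissible r g : 0 < r -> r / fu < g -> 0 < g /\ r < g * fu.
  move=> r_gt0 lt_g; rewrite -ltr_pdivrMr //; split => //.
  by apply: lt_trans lt_g; rewrite divr_gt0.
have denom_gt0 r g : 0 < r -> r < g * fu -> 0 < r * (g * fu - r).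
  by move=> ? ?; rewrite mulr_gt0 // subr_gt0.
set r1 := rho 1%N in r1_gt0 r12 dk_cross *.
set r2 := rho 2%N in r12 r2_le r2_lt_g1 dk_cross *.
have r2_gt0 : 0 < r2 by apply: lt_trans r12.
have [g1_gt0 r2_lt] := admissible _ _ r2_gt0 r2_lt_g1.
have r1_lt1 : r1 < gamma1 * fu by apply: lt_trans r2_lt.
have cross0 : cross_poly fu fv gu gv r1 r2 gamma1 = 0.
  by apply: dk_eq_cross_poly; rewrite // gt_eqF ?denom_gt0.
split; [|split; [|split]] => [g d|g|g d|k g k_ge2]
    /andP[/(admissible _ _ r1_gt0)[g_gt0 r1_lt] g_lt];
  have dk_gt := dk_gt0 gv_le0 detB_gt0 r1_gt0 g_gt0 r1_lt;
  rewrite beta1E beta2E.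
- case/andP=> d_gt0 d_lt; apply: Re_eig_lt0; first exact: tr_Emat_lt0 (ltW d_gt0) _.
  by rewrite det_Emat_dk ?gt_eqF ?mulr_gt0 ?subr_gt0 ?denom_gt0.
- rewrite det_Emat_dk ?gt_eqF ?denom_gt0 // subrr mul0r; apply: eig_det0.
  exact: tr_Emat_lt0 (ltW dk_gt) _.
- case/andP=> d_gt _; apply: eig_det_lt0.
  by rewrite det_Emat_dk ?gt_eqF ?denom_gt0 // pmulr_llt0 ?subr_lt0 ?denom_gt0.
- have rk_gt0 : 0 < rho k by apply: lt_le_trans (r2_le k k_ge2).
  apply: Re_eig_lt0; first exact: tr_Emat_lt0 (ltW dk_gt) _.
  apply: (det_Emat_dk_gt0 gv_le0 r1_gt0 r12 (r2_le k k_ge2) r1_lt (ltW dk_gt)).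
  apply: (dk_mul_gt gv_le0 g_gt0 r1_gt0 r1_lt).
  apply: (cross_poly_lt0 gv_le0 detB_gt0 fu_gt0 _ g_gt0 g_lt cross0).
  by rewrite mulr_ge0 ?ltW.
Qed.
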